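(* For every $n\ge3$, the Cayley--Dickson loop $Q_n$ is not automorphic, i.e. $Inn(Q_n)\not\le Aut(Q_n)$.
   Context: Cayley--Dickson loops: $Q_0=\{1,-1\}\subset\mathbb{R}$ with conjugation $x^*=x$. For $n\ge1$, $Q_n=\{(x,0),(x,1)\mid x\in Q_{n-1}\}$ with multiplication $(x,0)(y,0)=(xy,0)$, $(x,0)(y,1)=(yx,1)$, $(x,1)(y,0)=(xy^*,1)$, $(x,1)(y,1)=(-y^*x,0)$ and conjugation $(x,0)^*=(x^*,0)$, $(x,1)^*=(-x,1)$, where $-(x,a)=(-x,a)$. $Q_n$ is a loop with neutral element $1=(1,0,\dots,0)$ (nonassociative exactly when $n\ge3$). For a loop $Q$, $Inn(Q)=\{f\in Mlt(Q)\mid f(1)=1\}$ where $Mlt(Q)=\langle L_x,R_x\mid x\in Q\rangle$, $L_x(a)=xa$, $R_x(a)=ax$; $Aut(Q)$ is the group of loop automorphisms. A loop is automorphic if $Inn(Q)\le Aut(Q)$. *)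

From HB Require Import structures.
From mathcomp Require Import all_boot all_order all_fingroup.
Set Implicit Arguments. Unset Strict Implicit. Unset Printing Implicit Defensive.

Section LoopNotions.
Variables (Q : finType) (mul : Q -> Q -> Q) (one : Q).

Definition mlt_gens : {set {perm Q}} :=
  [set p : {perm Q} | [exists x : Q, [forall a : Q, p a == mul x a]]
                   || [exists x : Q, [forall a : Q, p a == mul a x]]].

Definition loopMlt : {set {perm Q}} := <<mlt_gens>>%g.

Definition loopInn : {set {perm Q}} := [set f in loopMlt | f one == one].

Definition loopAut : {set {perm Q}} :=
  [set f : {perm Q} | [forall a : Q, forall b : Q, f (mul a b) == mul (f a) (f b)]].

Definition automorphic : bool := loopInn \subset loopAut.
End LoopNotions.

(* Q_0 = {1,-1} encoded by bool (false = 1, true = -1);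
   Q_{n+1} = Q_n x bool, (x,false) = (x,0), (x,true) = (x,1). *)
Fixpoint cdT (n : nat) : finType :=
  match n with
  | 0 => bool
  | n'.+1 => (cdT n' * bool)%type
  end.

Fixpoint cd_one (n : nat) : cdT n :=
  match n return cdT n with
  | 0 => false
  | n'.+1 => (cd_one n', false)
  end.

Fixpoint cd_neg (n : nat) : cdT n -> cdT n :=
  match n return cdT n -> cdT n with
  | 0 => fun x => ~~ x
  | n'.+1 => fun p => (cd_neg p.1, p.2)
  end.

Fixpoint cd_conj (n : nat) : cdT n -> cdT n :=
  match n return cdT n -> cdT n with
  | 0 => fun x => x
  | n'.+1 => fun p => if p.2 then (cd_neg p.1, true) else (cd_conj p.1, false)
  end.

Fixpoint cd_mul (n : nat) : cdT n -> cdT n -> cdT n :=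
  match n return cdT n -> cdT n -> cdT n with
  | 0 => fun x y => xorb x y
  | n'.+1 => fun p q =>
      let: (x, a) := p in let: (y, b) := q in
      match a, b with
      | false, false => (cd_mul x y, false)
      | false, true => (cd_mul y x, true)
      | true, false => (cd_mul x (cd_conj y), true)
      | true, true => (cd_neg (cd_mul (cd_conj y) x), false)
      end
  end.

From mathcomp Require Import all_boot all_order all_fingroup.
Set Implicit Arguments. Unset Strict Implicit.

(* In any loop Q and for any x, the map T_x = R_x^{-1} L_x,
   characterised by T_x(u) x = x u, lies in Mlt(Q) and fixes 1, so it is an
   inner mapping.  Hence Q is not automorphic as soon as some T_x fails to be
   multiplicative, i.e. as soon as there are x, a, c with
   T_x(a) T_x(c) <> T_x(ac); we call such data an "inner twist".  *)

Section InnerTwist.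
Variables (Q : finType) (mul : Q -> Q -> Q) (one : Q).
Hypothesis mul_lcancel : forall x, injective (mul x).
Hypothesis mul_rcancel : forall x, injective (mul^~ x).
Hypothesis mul1q : forall x, mul one x = x.
Hypothesis mulq1 : forall x, mul x one = x.

Definition lperm (x : Q) : {perm Q} := perm (@mul_lcancel x).
Definition rperm (x : Q) : {perm Q} := perm (@mul_rcancel x).

(* T_x = R_x^{-1} L_x (composition in mathcomp is left-to-right). *)
Definition twist (x : Q) : {perm Q} := (lperm x * (rperm x)^-1)%g.

Lemma twistE x u v : mul v x = mul x u -> twist x u = v.
Proof.
move=> vx_xu; rewrite permM; apply: (@perm_inj _ (rperm x)).
by rewrite permKV !permE.
Qed.

Lemma twist_inn x : twist x \in loopInn mul one.
Proof.
have Lgen : lperm x \in mlt_gens mul.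
  by rewrite inE; apply/orP; left; apply/existsP; exists x;
     apply/forallP => a; rewrite permE.
have Rgen : rperm x \in mlt_gens mul.
  by rewrite inE; apply/orP; right; apply/existsP; exists x;
     apply/forallP => a; rewrite permE.
have fix1 : twist x one = one by apply: twistE; rewrite mul1q mulq1.
by rewrite inE fix1 eqxx andbT /loopMlt groupM ?groupV ?mem_gen.
Qed.

(* Data witnessing that some T_x is not multiplicative:
   b1 = T_x a, b2 = T_x c, b3 = T_x (a c) and b1 b2 <> b3. *)
Definition inner_twist : Prop := exists (x a c b1 b2 b3 : Q),
  [/\ mul b1 x = mul x a, mul b2 x = mul x c,
      mul b3 x = mul x (mul a c) & mul b1 b2 != b3].

Lemma inner_twist_not_automorphic : inner_twist -> ~~ automorphic mul one.
Proof.
case=> [x [a [c [b1 [b2 [b3 [Ta Tc Tac b1b2_ne_b3]]]]]]].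
apply/negP => /subsetP /(_ _ (twist_inn x)).
rewrite inE => /forallP /(_ a) /forallP /(_ c) /eqP.
rewrite (twistE Ta) (twistE Tc) (twistE Tac) => b1b2_eq_b3.
by rewrite b1b2_eq_b3 eqxx in b1b2_ne_b3.
Qed.

End InnerTwist.

Lemma cd_negK n : involutive (@cd_neg n).
Proof. by elim: n => [|n IH] /=; [case | case=> x b /=; rewrite IH]. Qed.

Lemma cd_conjK n : involutive (@cd_conj n).
Proof. by elim: n => [|n IH] //= [x []] /=; rewrite ?cd_negK ?IH. Qed.

(* Q_n is cancellative on both sides; the two halves are proved together
   since each step of the doubling swaps left and right multiplication. *)
Lemma cd_mul_cancel n (x : cdT n) :
  injective (@cd_mul n x) /\ injective (fun y => cd_mul y x).
Proof.
elim: n x => [|n IH] x /=.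
  by split=> y z /=; case: x; case: y; case: z.
have negI := can_inj (@cd_negK n); have conjI := can_inj (@cd_conjK n).
case: x => x a; split=> - [y b] [z c]; case: a; case: b; case: c => //= [] [].
- by move/negI/(proj2 (IH x))/conjI ->.
- by move/(proj1 (IH x))/conjI ->.
- by move/(proj2 (IH x)) ->.
- by move/(proj1 (IH x)) ->.
- by move/negI/(proj1 (IH _)) ->.
- by move/(proj1 (IH _)) ->.
- by move/(proj2 (IH _)) ->.
- by move/(proj2 (IH _)) ->.
Qed.

Lemma cd_conj1 n : cd_conj (cd_one n) = cd_one n.
Proof. by elim: n => //= n ->. Qed.

Lemma cd_mul1 n : (forall x, cd_mul (cd_one n) x = x) /\
                  (forall x, cd_mul x (cd_one n) = x).
Proof.
elim: n => [|n [IHl IHr]]; first by split; case.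
by split=> - [x []]; rewrite /= ?cd_conj1 ?(IHl x) ?(IHr x).
Qed.

Lemma cd_inner_twist3 : inner_twist (@cd_mul 3).
Proof.
exists (false, false, false, true), (false, false, true, false),
  (false, true, false, false), (true, false, true, false),
  (true, true, false, false), (false, true, true, false).
by split; vm_compute.
Qed.

(* The embedding x |-> (x,0) of Q_n into Q_(n+1) carries inner twists. *)
Lemma cd_inner_twist_lift n : inner_twist (@cd_mul n) -> inner_twist (@cd_mul n.+1).
Proof.
case=> [x [a [c [b1 [b2 [b3 [Ta Tc Tac ne]]]]]]].
exists (x, false), (a, false), (c, false), (b1, false), (b2, false), (b3, false).
split=> /=; rewrite ?Ta ?Tc ?Tac //.
by apply: contra ne => /eqP [->].
Qed.

Lemma cd_inner_twist n : 3 <= n -> inner_twist (@cd_mul n).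
Proof.
elim: n => [|n IH] //; rewrite leq_eqVlt => /orP [/eqP <- | /IH].
  exact: cd_inner_twist3.
exact: cd_inner_twist_lift.
Qed.

Theorem mainTheorem7 (n : nat) (hn : 3 <= n) :
  ~~ (loopInn (@cd_mul n) (cd_one n) \subset loopAut (@cd_mul n)).
Proof.
have [mul1q mulq1] := cd_mul1 n.
exact: (inner_twist_not_automorphic (fun x => proj1 (cd_mul_cancel x))
          (fun x => proj2 (cd_mul_cancel x)) mul1q mulq1 (cd_inner_twist hn)).
Qed.
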